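(* Let $G=(V,E)$ be a prime permutation graph, let $(<_1,<_2)$ be a realizer of $G$, and let $w$ be the first element of $<_1$. Then the relations $\vartriangleleft_1^w$ and $\vartriangleleft_2^w$ are strict linear orders on $V$.
   Context: Graphs are finite, simple, undirected, with nonempty vertex set. A module of $G$ is a nonempty $M\subseteq V$ such that every vertex outside $M$ is adjacent to all or none of $M$; $G$ is prime if its only modules are $V$ and the singletons. A realizer of $G$ is a pair $(<_1,<_2)$ of strict linear orders on $V$ such that distinct $u,v$ are adjacent iff they appear in different orders in $<_1$ and $<_2$; $G$ is a permutation graph if it has a realizer. For a pair of binary relations $(\lhd_1,\lhd_2)$ on $V$: its transitive closure is $(\lhd_1^T,\lhd_2^T)$ (componentwise transitive closures); its closure under $E$ is $(\lhd_1^E,\lhd_2^E)$ where, for $i\in[2]$, $\lhd_i^E=\lhd_i\cup\{(v,u)\mid u\lhd_{3-i}v,\ \{u,v\}\in E\}\cup\{(u,v)\mid u\lhd_{3-i}v,\ \{u,v\}\notin E\}$. For $w\in V$ define $\lhd_{1,0}^w=\{(w,v)\mid v\in V, v\ne w\}$, $\lhd_{2,0}^w=\emptyset$, and for $k\ge0$, $(\lhd_{1,k+1}^w,\lhd_{2,k+1}^w)=((\lhd_{1,k}^w,\lhd_{2,k}^w)^E)^T$. These increase with $k$; $\lhd_i^w$ denotes $\lhd_{i,m}^w$ for $m$ such that the sequence has stabilized. *)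

From mathcomp Require Import all_boot.
Set Implicit Arguments. Unset Strict Implicit. Unset Printing Implicit Defensive.

Definition simple_graph (T : finType) (e : rel T) : Prop :=
  symmetric e /\ irreflexive e.

Definition is_module (T : finType) (e : rel T) (M : {set T}) : Prop :=
  M != set0 /\
  forall x, x \notin M -> (forall m, m \in M -> e x m) \/ (forall m, m \in M -> ~~ e x m).

Definition prime_graph (T : finType) (e : rel T) : Prop :=
  forall M : {set T}, is_module e M -> M = setT \/ #|M| = 1.

Definition strict_linear_order (T : finType) (r : rel T) : Prop :=
  irreflexive r /\ transitive r /\ (forall x y, x != y -> r x y \/ r y x).

Definition realizer (T : finType) (e : rel T) (r1 r2 : rel T) : Prop :=
  strict_linear_order r1 /\ strict_linear_order r2 /\
  forall u v, u != v -> (e u v <-> ((r1 u v /\ r2 v u) \/ (r1 v u /\ r2 u v))).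

Definition tclosure (T : finType) (r : rel T) : rel T :=
  fun x y => [exists z, r x z && connect r z y].

Definition pair_T (T : finType) (p : rel T * rel T) : rel T * rel T :=
  (tclosure p.1, tclosure p.2).

Definition pair_E (T : finType) (e : rel T) (p : rel T * rel T) : rel T * rel T :=
  ((fun x y => [|| p.1 x y, e x y && p.2 y x | ~~ e x y && p.2 x y]),
   (fun x y => [|| p.2 x y, e x y && p.1 y x | ~~ e x y && p.1 x y])).

Definition lhd0 (T : finType) (w : T) : rel T * rel T :=
  ((fun x y => (x == w) && (y != w)), (fun _ _ => false)).

Fixpoint lhd_seq (T : finType) (e : rel T) (w : T) (k : nat) : rel T * rel T :=
  match k with
  | 0 => lhd0 w
  | k'.+1 => pair_T (pair_E e (lhd_seq e w k'))
  end.

Definition stabilized_at (T : finType) (e : rel T) (w : T) (m : nat) : Prop :=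
  forall k, m <= k -> forall x y,
    (lhd_seq e w k).1 x y = (lhd_seq e w m).1 x y /\
    (lhd_seq e w k).2 x y = (lhd_seq e w m).2 x y.

From mathcomp Require Import all_boot.
Set Implicit Arguments. Unset Strict Implicit. Unset Printing Implicit Defensive.

(* The relations lhd_{i,k}^w grow with k among the finitely many pairs of
   relations on V, so they stabilize; the limit (R1, R2) is transitive and
   closed under E, and induction on k gives R_i <= <_i, so both are
   irreflexive.  Closure under E makes R1- and R2-comparability coincide, so
   only totality is at stake.  If z is comparable to two incomparable
   vertices u and v, then z lies on the same side of u and v in <_1
   (transitivity through z would otherwise relate u and v), and likewise in
   <_2; hence z is adjacent to both or to neither.  So every connected
   component of the incomparability graph is a module.  By primality it is a
   singleton or all of V, and the latter is impossible because w is below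
   every other vertex. *)

Section TransitiveClosure.

Variables (T : finType) (r : rel T).

Lemma tclosure_sub : subrel r (tclosure r).
Proof. by move=> x y rxy; apply/existsP; exists y; rewrite rxy connect0. Qed.

Lemma tclosure_trans : transitive (tclosure r).
Proof.
move=> y x z /existsP[a /andP[rxa ay]] /existsP[b /andP[ryb bz]].
apply/existsP; exists a; rewrite rxa /=.
exact: connect_trans ay (connect_trans (connect1 ryb) bz).
Qed.

Lemma tclosure_min (s : rel T) : subrel r s -> transitive s -> subrel (tclosure r) s.
Proof.
move=> rs trs x y /existsP[a /andP[/rs sxa /connectP[p]]].
elim: p a sxa => [|b p IHp] a sxa /=; first by move=> _ ->.
by case/andP=> /rs sab; apply: IHp; apply: trs sab.
Qed.

Lemma tclosure_fixpoint (s : rel T) :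
  s =2 tclosure r -> transitive s /\ subrel r s.
Proof.
move=> fix_s; split; first by move=> y x z; rewrite !fix_s; apply: tclosure_trans.
by move=> x y /tclosure_sub; rewrite fix_s.
Qed.

End TransitiveClosure.

Lemma eq_tclosure (T : finType) (r s : rel T) : r =2 s -> tclosure r =2 tclosure s.
Proof. by move=> eq_rs x y; apply: eq_existsb => z; rewrite eq_rs (eq_connect eq_rs). Qed.

Lemma subset_chain_stalls (A : finType) (S : nat -> {set A}) :
  (forall k, S k \subset S k.+1) -> exists k, S k = S k.+1.
Proof.
move=> incS.
suff [//|] : (exists k, S k = S k.+1) \/ #|A|.+1 <= #|S #|A|.+1|.
  by rewrite ltnNge max_card.
elim: #|A|.+1 => [|n [|le_n_Sn]]; [by right | by left | ].
have [eqS | neqS] := eqVneq (S n) (S n.+1); [by left; exists n | right].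
by apply: leq_ltn_trans le_n_Sn (proper_card _); rewrite properEneq neqS incS.
Qed.

Definition comparable_by (T : Type) (R : rel T) : rel T :=
  fun x y => R x y || R y x.

Definition incomparable_by (T : eqType) (R : rel T) : rel T :=
  fun x y => (x != y) && ~~ comparable_by R x y.

Section StrictLinearOrders.

Variables (T : finType) (r : rel T).
Hypothesis slo_r : strict_linear_order r.

Lemma slo_gtNlt x y : x != y -> r y x = ~~ r x y.
Proof.
have [irr_r [tr_r tot_r]] := slo_r => xy; case rxy: (r x y) => /=.
  by apply/negP => /(tr_r _ _ _ rxy); rewrite irr_r.
by case: (tot_r _ _ xy); rewrite ?rxy.
Qed.

Lemma slo_neq x y : r x y -> x != y.
Proof. by have [irr_r _] := slo_r; apply: contraTneq => ->; rewrite irr_r. Qed.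

Lemma comparable_by_neq (R : rel T) x y :
  subrel R r -> comparable_by R x y -> x != y.
Proof. by move=> Rr /orP[/Rr/slo_neq // | /Rr/slo_neq]; rewrite eq_sym. Qed.

Lemma comparable_by_subrelE (R : rel T) x y :
  subrel R r -> comparable_by R x y -> R x y = r x y.
Proof.
move=> Rr cxy; have xy := comparable_by_neq Rr cxy.
case/orP: cxy => [Rxy | /Rr ryx]; first by rewrite Rxy (Rr _ _ Rxy).
have /negbTE nrxy : ~~ r x y by rewrite -slo_gtNlt.
by rewrite nrxy; apply/negbTE/negP => /Rr; rewrite nrxy.
Qed.

Lemma slo_same_side (R : rel T) z a b :
  transitive R -> subrel R r ->
  comparable_by R z a -> comparable_by R z b -> ~~ comparable_by R a b ->
  r z a = r z b.
Proof.
move=> trR Rr cza czb nab; rewrite -!(comparable_by_subrelE Rr) //.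
have flip u v : comparable_by R u v -> R u v = false -> R v u by case/orP=> [->|].
case Rza: (R z a); case Rzb: (R z b) => //.
  by rewrite /comparable_by (trR z _ _ (flip _ _ czb Rzb) Rza) orbT in nab.
by rewrite /comparable_by (trR z _ _ (flip _ _ cza Rza) Rzb) in nab.
Qed.

Lemma slo_subrel (R : rel T) :
  subrel R r -> transitive R -> (forall x y, x != y -> comparable_by R x y) ->
  strict_linear_order R.
Proof.
have [irr_r _] := slo_r => Rr trR totR; split=> [x | ]; last by split=> // x y /totR /orP.
by apply/negP => /Rr; rewrite irr_r.
Qed.

End StrictLinearOrders.

Section Realizers.

Variables (T : finType) (e r1 r2 : rel T).
Hypothesis re : realizer e r1 r2.

Lemma realizer_sym : realizer e r2 r1.
Proof.
have [s1 [s2 adj]] := re; split=> //; split=> // u v uv.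
by have := adj u v uv; tauto.
Qed.

Lemma realizer_adj x y : x != y -> e x y = (r1 x y != r2 x y).
Proof.
have [s1 [s2 adj]] := re => xy; have := adj _ _ xy.
rewrite (slo_gtNlt s1 xy) (slo_gtNlt s2 xy).
by case: (e x y); case: (r1 x y); case: (r2 x y) => /= -[]; rewrite /is_true; intuition.
Qed.

Lemma pair_E1_sub (p : rel T * rel T) :
  subrel p.1 r1 -> subrel p.2 r2 -> subrel (pair_E e p).1 r1.
Proof.
have [_ [s2 _]] := re.
move=> p1r p2r x y /or3P[/p1r // | /andP[exy /p2r r2yx] | /andP[nexy /p2r r2xy]].
  have yx := slo_neq s2 r2yx.
  move: exy; rewrite realizer_adj 1?eq_sym // (slo_gtNlt s2 yx) r2yx.
  by case: (r1 x y).
have xy := slo_neq s2 r2xy.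
by move: nexy; rewrite realizer_adj // r2xy; case: (r1 x y).
Qed.

End Realizers.

Definition lhd_step (T : finType) (e : rel T) (p : rel T * rel T) : rel T * rel T :=
  pair_T (pair_E e p).

Lemma lhd_step_ext (T : finType) (e : rel T) (p q : rel T * rel T) :
  p.1 =2 q.1 -> p.2 =2 q.2 ->
  (lhd_step e p).1 =2 (lhd_step e q).1 /\ (lhd_step e p).2 =2 (lhd_step e q).2.
Proof. by move=> eq1 eq2; split; apply: eq_tclosure => x y /=; rewrite !eq1 !eq2. Qed.

Section LhdSequence.

Variables (T : finType) (e : rel T) (w : T).

Local Notation lhd := (lhd_seq e w).

Lemma lhd_seq_sub j k : j <= k ->
  subrel (lhd j).1 (lhd k).1 /\ subrel (lhd j).2 (lhd k).2.
Proof.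
elim: k => [|k IH]; first by rewrite leqn0 => /eqP ->; split=> x y.
rewrite leq_eqVlt => /orP[/eqP -> | /IH[sub1 sub2]]; first by split=> x y.
by split=> x y; [move/sub1 | move/sub2] => lhd_xy; apply: tclosure_sub; rewrite /= lhd_xy.
Qed.

Lemma lhd_seq_stabilizes : exists m, stabilized_at e w m.
Proof.
pose S k := [set p : bool * (T * T) |
  if p.1 then (lhd k).1 p.2.1 p.2.2 else (lhd k).2 p.2.1 p.2.2].
have incS k : S k \subset S k.+1.
  have [sub1 sub2] := lhd_seq_sub (leqnSn k).
  by apply/subsetP => -[[] [x y]]; rewrite !inE; [apply: sub1 | apply: sub2].
have [m /setP eqS] := subset_chain_stalls incS.
have step1 : (lhd m.+1).1 =2 (lhd m).1.
  by move=> x y; have := eqS (true, (x, y)); rewrite !inE.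
have step2 : (lhd m.+1).2 =2 (lhd m).2.
  by move=> x y; have := eqS (false, (x, y)); rewrite !inE.
suff lhd_eq d : (lhd (d + m)).1 =2 (lhd m).1 /\ (lhd (d + m)).2 =2 (lhd m).2.
  by exists m => k /subnK <- x y; have [-> ->] := lhd_eq (k - m).
elim: d => [// | d [IH1 IH2]]; have [E1 E2] := lhd_step_ext e IH1 IH2.
by split=> x y; [rewrite -step1 | rewrite -step2]; [apply: E1 | apply: E2].
Qed.

Lemma stabilized_lhd_step m : stabilized_at e w m ->
  (lhd m).1 =2 (lhd_step e (lhd m)).1 /\ (lhd m).2 =2 (lhd_step e (lhd m)).2.
Proof.
move=> stab; split=> x y; have [E1 E2] := stab _ (leqnSn m) x y.
  by rewrite -E1.
by rewrite -E2.
Qed.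

Lemma lhd_seq_sub_realizer r1 r2 : realizer e r1 r2 -> (forall v, v != w -> r1 w v) ->
  forall k, subrel (lhd k).1 r1 /\ subrel (lhd k).2 r2.
Proof.
move=> re w_min; have [[_ [tr1 _]] [[_ [tr2 _]] _]] := re.
elim=> [|k [sub1 sub2]]; first by split=> x y //=; case/andP=> /eqP -> /w_min.
split; first exact: tclosure_min (pair_E1_sub re sub1 sub2) tr1.
have re21 := realizer_sym re.
exact: tclosure_min (pair_E1_sub re21 (p := ((lhd k).2, (lhd k).1)) sub2 sub1) tr2.
Qed.

End LhdSequence.

Section ClosedUnderE.

Variables (T : finType) (e : rel T).
Hypothesis e_sym : symmetric e.

Lemma pair_E2_closed_comparable (p : rel T * rel T) :
  subrel (pair_E e p).2 p.2 -> subrel p.1 (comparable_by p.2).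
Proof.
move=> cl2 x y p1xy; apply/orP; case exy: (e x y).
  by right; apply: cl2; rewrite /= e_sym exy p1xy orbT.
by left; apply: cl2; rewrite /= exy p1xy !orbT.
Qed.

Lemma pair_E_closed_comparable (p : rel T * rel T) :
  subrel (pair_E e p).1 p.1 -> subrel (pair_E e p).2 p.2 ->
  comparable_by p.1 =2 comparable_by p.2.
Proof.
move=> cl1 cl2; have c12 := pair_E2_closed_comparable cl2.
have c21 := @pair_E2_closed_comparable (p.2, p.1) cl1.
have flip q u v : comparable_by q u v = comparable_by q v u by rewrite /comparable_by orbC.
by move=> x y; apply/idP/idP => /orP[] => [/c12 | /c12 | /c21 | /c21] //; rewrite flip.
Qed.

End ClosedUnderE.

Lemma incomparable_by_sym (T : eqType) (R : rel T) : symmetric (incomparable_by R).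
Proof. by move=> x y; rewrite /incomparable_by /comparable_by eq_sym orbC. Qed.

Section IncomparabilityClasses.

Variables (T : finType) (e r1 r2 R1 R2 : rel T).
Hypotheses (re : realizer e r1 r2) (tr1 : transitive R1) (tr2 : transitive R2).
Hypotheses (sub1 : subrel R1 r1) (sub2 : subrel R2 r2).
Hypothesis comparableE : comparable_by R1 =2 comparable_by R2.

Local Notation I := (incomparable_by R1).

Lemma adj_incomparable_eq z u v :
  comparable_by R1 z u -> comparable_by R1 z v -> I u v -> e z u = e z v.
Proof.
have [s1 [s2 _]] := re => czu czv /andP[_ nuv].
have zu := comparable_by_neq s1 sub1 czu; have zv := comparable_by_neq s1 sub1 czv.
rewrite !(realizer_adj re) // (slo_same_side s1 tr1 sub1 czu czv nuv).
rewrite !comparableE in czu czv nuv.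
by rewrite (slo_same_side s2 tr2 sub2 czu czv nuv).
Qed.

Lemma incomparability_class_module x : is_module e [set v | connect I x v].
Proof.
set M := [set v | _].
have M_closed u v : I u v -> (u \in M) = (v \in M).
  move=> Iuv; rewrite !inE.
  exact: connect_closed (sym_connect_sym (@incomparable_by_sym _ R1)) x _ _ Iuv.
have xM : x \in M by rewrite inE connect0.
have M_connect v : v \in M -> connect I x v by rewrite inE.
clearbody M; split=> [|z zM]; first by apply/set0Pn; exists x.
have cz v : v \in M -> comparable_by R1 z v.
  move=> vM; apply: contraT => nczv.
  have zv : z != v by apply: contraNneq zM => ->.
  have Izv : I z v by rewrite /incomparable_by zv nczv.
  by rewrite (M_closed _ _ Izv) vM in zM.
have cl : closed I [pred v | (v \in M) ==> (e z v == e z x)].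
  move=> u v Iuv; rewrite !inE -(M_closed _ _ Iuv).
  have [uM | //] := boolP (u \in M); have vM : v \in M by rewrite -(M_closed _ _ Iuv).
  by rewrite (adj_incomparable_eq (cz _ uM) (cz _ vM) Iuv).
have e_const v : v \in M -> e z v = e z x.
  move=> vM; have := closed_connect cl (M_connect _ vM).
  by rewrite !inE xM vM eqxx => /esym/eqP.
by case ezx: (e z x); [left | right] => v /e_const ->; rewrite ezx.
Qed.

Lemma prime_comparable w : prime_graph e -> (forall v, v != w -> R1 w v) ->
  forall x y, x != y -> comparable_by R1 x y.
Proof.
move=> e_prime w_min x y xy; apply: contraT => nxy.
have Ixy : I x y by rewrite /incomparable_by xy.
have I_connect_sym := sym_connect_sym (@incomparable_by_sym _ R1).
case: (e_prime _ (incomparability_class_module x)) => [classT | /eqP/cards1P[a class1]].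
- have w_isolated v : ~~ I w v.
    case: (eqVneq w v) => [<- | wv]; first by rewrite /incomparable_by eqxx.
    have Rwv : R1 w v by apply: w_min; rewrite eq_sym.
    by rewrite /incomparable_by /comparable_by Rwv andbF.
  have /connectP[[|v p] /= Ip xw] : connect I w x.
    by rewrite I_connect_sym; have := in_setT w; rewrite -classT inE.
    by rewrite xw /comparable_by w_min // -xw eq_sym in nxy.
  by rewrite (negbTE (w_isolated v)) in Ip.
- have in_class v : connect I x v -> v = a.
    by move=> xv; apply/set1P; rewrite -class1 inE.
  by move: xy; rewrite (in_class _ (connect0 _ _)) (in_class _ (connect1 Ixy)) eqxx.
Qed.

End IncomparabilityClasses.

Theorem theorem5p6 (T : finType) (e : rel T) (r1 r2 : rel T) (w : T) :
  simple_graph e ->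
  prime_graph e ->
  realizer e r1 r2 ->
  (forall v, v != w -> r1 w v) ->
  (exists m, stabilized_at e w m) /\
  (forall m, stabilized_at e w m ->
     strict_linear_order (lhd_seq e w m).1 /\
     strict_linear_order (lhd_seq e w m).2).
Proof.
move=> [e_sym _] e_prime re w_min; split; first exact: lhd_seq_stabilizes.
move=> m /stabilized_lhd_step[fix1 fix2].
have [tr1 cl1] := tclosure_fixpoint fix1; have [tr2 cl2] := tclosure_fixpoint fix2.
have [sub1 sub2] := lhd_seq_sub_realizer re w_min m.
have comparableE := pair_E_closed_comparable e_sym cl1 cl2.
have lhd_w_min v : v != w -> (lhd_seq e w m).1 w v.
  by move=> vw; apply: (lhd_seq_sub e w (leq0n m)).1; rewrite /= eqxx.
have tot1 := prime_comparable re tr1 tr2 sub1 sub2 comparableE e_prime lhd_w_min.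
have [s1 [s2 _]] := re; split; first exact: (slo_subrel s1 sub1 tr1 tot1).
by apply: (slo_subrel s2 sub2 tr2) => x y /tot1; rewrite comparableE.
Qed.
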